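(* Let $\phi$ be a continuous-time random dynamical system and for $h>0$ let $\varphi_h(\omega)=\phi(h,\omega)$ be its time-$h$ map, generating the discrete random dynamical system $\varphi_h^k(\omega)=\phi(kh,\omega)$, $k\in\mathbb Z$, over $\theta_h$. Suppose there exists $\delta>0$ such that for every $h\in(0,\delta]$, the random set $S$ is a random isolated invariant set of $\varphi_h$. Then $S$ is a random isolated invariant set of $\phi$.
   Context: Let $(\Omega,\mathscr F,\mathbb P)$ be a probability space with a measurable flow $(\theta_t)_{t\in\mathbb R}$ preserving $\mathbb P$, and $(X,d_X)$ a locally compact separable complete metric space. A continuous-time random dynamical system is a measurable map $\phi:\mathbb R\times\Omega\times X\to X$ with $(t,x)\mapsto\phi(t,\omega,x)$ continuous for each $\omega$, $\phi(0,\omega)=\mathrm{id}_X$ and $\phi(t+s,\omega)=\phi(t,\theta_s\omega)\circ\phi(s,\omega)$ for all $t,s,\omega$. A multifunction $D$ with compact values is a random compact set if $\omega\mapsto\mathrm{dist}_X(x,D(\omega))$ is measurable for each $x$. For a random compact set $N$ and the time set $\mathbb T=\mathbb R$ (for $\phi$) or $\mathbb T=h\mathbb Z$ (for $\varphi_h$), $\mathrm{Inv}N(\omega)=\{x\in N(\omega):\phi(t,\omega,x)\in N(\theta_t\omega)\ \forall t\in\mathbb T\}$; $N$ is a random isolating neighborhood if $\mathrm{Inv}N(\omega)\subset\mathrm{int}N(\omega)$, and $S$ is a random isolated invariant set if $S=\mathrm{Inv}N$ for some random isolating neighborhood $N$. *)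

From HB Require Import structures.
From mathcomp Require Import all_boot all_order all_algebra.
From mathcomp Require Import all_classical all_reals all_analysis.
From mathcomp Require Import measurable_realfun.
Set Implicit Arguments. Unset Strict Implicit. Unset Printing Implicit Defensive.
Import Order.TTheory GRing.Theory Num.Theory.
Import numFieldTopology.Exports.
Local Open Scope classical_set_scope.
Local Open Scope ring_scope.

Section RDS.
Context {R : realType} {d : measure_display} {Omega : measurableType d}.
Context {X : metricType R}.

Definition measurable_flow_preserving (P : probability Omega R)
    (theta : R -> Omega -> Omega) : Prop :=
  [/\ measurable_fun setT (fun p : R * Omega => theta p.1 p.2),
      (forall w, theta 0 w = w),
      (forall t s w, theta (t + s) w = theta t (theta s w)) &
      (forall t A, measurable A -> P (theta t @^-1` A) = P A)].

Definition lc_separable_complete : Prop :=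
  [/\ locally_compact [set: X],
      (exists D : set X, countable D /\ closure D = setT) &
      (forall F : set_system X, ProperFilter F -> cauchy F -> exists x : X, F --> x)].

Definition borelX : set (set X) := <<s @open X >>.

Definition prod_sigma_RO_X : set (set ((R * Omega) * X)) :=
  <<s [set AC | exists2 A : set (R * Omega), measurable A &
                exists2 C : set X, borelX C & AC = A `*` C] >>.

Definition is_RDS (theta : R -> Omega -> Omega)
    (phi : R -> Omega -> X -> X) : Prop :=
  [/\ (forall B, borelX B ->
         prod_sigma_RO_X [set p | B (phi p.1.1 p.1.2 p.2)]),
      (forall w, continuous (fun p : R * X => phi p.1 w p.2)),
      (forall w x, phi 0 w x = x) &
      (forall t s w x, phi (t + s) w x = phi t (theta s w) (phi s w x))].

(* dist_X(x, A) = inf_{y in A} d_X(x, y) (extended real; +oo for empty A) *)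
Definition distX (x : X) (A : set X) : \bar R :=
  ereal_inf [set (mdist x y)%:E | y in A].

Definition random_compact_set (D : Omega -> set X) : Prop :=
  (forall w, compact (D w)) /\
  (forall x, measurable_fun setT (fun w => distX x (D w))).

Definition Inv (theta : R -> Omega -> Omega) (phi : R -> Omega -> X -> X)
    (TT : set R) (N : Omega -> set X) : Omega -> set X :=
  fun w => [set x | N w x /\ forall t, TT t -> N (theta t w) (phi t w x)].

Definition random_isolating_nbhd theta phi (TT : set R) (N : Omega -> set X) :=
  random_compact_set N /\ (forall w, Inv theta phi TT N w `<=` interior (N w)).

Definition random_isolated_invariant theta phi (TT : set R) (S : Omega -> set X) :=
  exists N, random_isolating_nbhd theta phi TT N /\
            (forall w, S w = Inv theta phi TT N w).

(* time set h Z of the time-h map varphi_h *)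
Definition hZ (h : R) : set R := [set t | exists k : int, t = k%:~R * h].

End RDS.

From Pilot Require Import Defs.
From HB Require Import structures.
From mathcomp Require Import all_boot all_order all_algebra.
From mathcomp Require Import all_classical all_reals all_analysis.
From mathcomp Require Import measurable_realfun.
Set Implicit Arguments. Unset Strict Implicit. Unset Printing Implicit Defensive.
Import Order.TTheory GRing.Theory Num.Theory.
Import numFieldTopology.Exports.
Local Open Scope classical_set_scope.
Local Open Scope ring_scope.

(* Every time t lies in h Z for some step 0 < h <= delta, and Inv over h Z of an
   isolating neighbourhood is invariant under the discrete flow, so S is invariant
   under every phi(t).  Taking the isolating neighbourhood N of the time-delta map,
   an invariant S contained in N is contained in the continuous-time Inv N, which in
   turn is contained in the discrete-time Inv N = S; and N isolates Inv N in
   continuous time because the continuous-time Inv N is the smaller set. *)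

Lemma hZD (R : realType) (h s t : R) : hZ h s -> hZ h t -> hZ h (s + t).
Proof. by move=> [j ->] [k ->]; exists (j + k); rewrite rmorphD mulrDl. Qed.

Lemma hZ_cover (R : realType) (delta t : R) : 0 < delta ->
  exists h : R, [/\ 0 < h, h <= delta & hZ h t].
Proof.
move=> delta_gt0; have [->|t_neq0] := eqVneq t 0.
  by exists delta; split => //; exists 0; rewrite mul0r.
set n := (Num.truncn (`|t| / delta)).+1.
have t_delta_lt_n : `|t| / delta < n%:R by exact: truncnS_gt.
have n_gt0 : (0 : R) < n%:R.
  by apply: le_lt_trans t_delta_lt_n; rewrite divr_ge0 // ltW.
have n_neq0 : n%:R != 0 :> R by rewrite gt_eqF.
exists (`|t| / n%:R); split.
- by rewrite divr_gt0 ?normr_gt0.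
- by rewrite ler_pdivrMr // mulrC -ler_pdivrMr // ltW.
- have [t_gt0|t_le0] := ltrP 0 t.
    by exists n%:Z; rewrite gtr0_norm // mulrC divfK.
  by exists (- n%:Z); rewrite ler0_norm // mulrNz mulNr mulrC divfK // opprK.
Qed.

Section MaximalInvariantSet.
Context {R : realType} {d : measure_display} {Omega : measurableType d}.
Context {X : metricType R}.
Variables (theta : R -> Omega -> Omega) (phi : R -> Omega -> X -> X).

Lemma Inv_time_antitone (T1 T2 : set R) (N : Omega -> set X) w :
  T1 `<=` T2 -> Defs.Inv theta phi T2 N w `<=` Defs.Inv theta phi T1 N w.
Proof. by move=> T12 x [Nx invx]; split => // t /T12; exact: invx. Qed.

Lemma isolating_nbhd_time_superset (T1 T2 : set R) (N : Omega -> set X) :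
  T1 `<=` T2 -> random_isolating_nbhd theta phi T1 N ->
  random_isolating_nbhd theta phi T2 N.
Proof.
move=> T12 [compactN isolN]; split => // w.
by move=> x Ix; apply/isolN; exact: Inv_time_antitone Ix.
Qed.

Lemma Inv_eq_invariant_subset (T1 T2 : set R) (N S : Omega -> set X) :
  T1 `<=` T2 -> (forall w, S w = Defs.Inv theta phi T1 N w) ->
  (forall t w x, T2 t -> S w x -> S (theta t w) (phi t w x)) ->
  forall w, S w = Defs.Inv theta phi T2 N w.
Proof.
move=> T12 SE S_inv w; apply/seteqP; split => x; last first.
  by rewrite SE; exact: Inv_time_antitone.
move=> Sx; split; first by move: Sx; rewrite SE => -[].
by move=> t T2t; have := S_inv t w x T2t Sx; rewrite SE => -[].
Qed.

Hypothesis theta_flow : forall t s w, theta (t + s) w = theta t (theta s w).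
Hypothesis phi_cocycle :
  forall t s w x, phi (t + s) w x = phi t (theta s w) (phi s w x).

Lemma Inv_invariant (T : set R) (N : Omega -> set X) t w x :
  (forall s t, T s -> T t -> T (s + t)) -> T t ->
  Defs.Inv theta phi T N w x -> Defs.Inv theta phi T N (theta t w) (phi t w x).
Proof.
move=> T_add Tt [Nx invx]; split; first exact: invx.
by move=> s Ts; rewrite -theta_flow -phi_cocycle; apply: invx; exact: T_add.
Qed.

End MaximalInvariantSet.

Theorem mainTheorem12 (R : realType) (d : measure_display) (Omega : measurableType d)
  (P : probability Omega R) (theta : R -> Omega -> Omega)
  (X : metricType R) (phi : R -> Omega -> X -> X) (S : Omega -> set X) :
  measurable_flow_preserving P theta ->
  @lc_separable_complete R X ->
  is_RDS theta phi ->
  (exists2 delta : R, 0 < delta &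
     forall h : R, 0 < h -> h <= delta ->
       random_isolated_invariant theta phi (hZ h) S) ->
  random_isolated_invariant theta phi [set: R] S.
Proof.
move=> [_ _ theta_flow _] _ [_ _ _ phi_cocycle] [delta delta_gt0 isolated_h].
have S_invariant t w x : S w x -> S (theta t w) (phi t w x).
  have [h [h_gt0 h_le t_hZ]] := hZ_cover t delta_gt0.
  have [N [_ SE]] := isolated_h h h_gt0 h_le.
  rewrite !SE.
  exact: (Inv_invariant theta_flow phi_cocycle (@hZD _ h) t_hZ).
have [N [isolN SE]] := isolated_h delta delta_gt0 (lexx _).
exists N; split; first exact: isolating_nbhd_time_superset (subsetT _) isolN.
apply: (Inv_eq_invariant_subset (subsetT _) SE) => t w x _.
exact: S_invariant.
Qed.
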